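(* Let $\delta=(\delta_1,\dots,\delta_n)\in\{\mathsf{A},\mathsf{D}\}^n$ and let $I=(I_1,\dots,I_n)$ be an integer vector with $I_i\in[0,\tfrac{i(i-1)}{2}]$ for each $i$. If $\mathbf{i}\in R(w_0^{(n+1)})$ satisfies $\mathbf{i}\sim \mathbf{i}_\delta(I)$, then $\mathrm{ind}_\delta(\mathbf{i})=I$.
   Context: Let $R(w_0^{(n+1)})$ denote the set of reduced words $\mathbf{i}=(i_1,\dots,i_{\bar n})\in[n]^{\bar n}$ of the longest element $w_0^{(n+1)}$ of the symmetric group $\mathfrak{S}_{n+1}$ (generated by simple transpositions $s_1,\dots,s_n$), where $\bar n=n(n+1)/2$. A 2-move exchanges two consecutive letters $i,j$ with $|i-j|>1$; write $\mathbf{i}\sim\mathbf{i}'$ if $\mathbf{i}$ and $\mathbf{i}'$ are related by a sequence of 2-moves. Put $\mathsf{D}_n=(n,n-1,\dots,1)$ and $\mathsf{A}_n=(1,2,\dots,n)$. Every $\mathbf{i}\in R(w_0^{(n+1)})$ satisfies $\mathbf{i}\sim\mathbf{i}^-_{\mathsf{D}}\,\mathsf{D}_n\,\mathbf{i}^+_{\mathsf{D}}\sim\mathbf{i}^-_{\mathsf{A}}\,\mathsf{A}_n\,\mathbf{i}^+_{\mathsf{A}}$ for some words $\mathbf{i}^\pm_{\mathsf{D}},\mathbf{i}^\pm_{\mathsf{A}}$ (chosen minimal, i.e. using as few 2-moves as possible); the $\mathsf{D}$-index and $\mathsf{A}$-index are $\mathrm{ind}_{\mathsf{D}}(\mathbf{i})=|\mathbf{i}^+_{\mathsf{D}}|$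 and $\mathrm{ind}_{\mathsf{A}}(\mathbf{i})=|\mathbf{i}^+_{\mathsf{A}}|$. For a word $\mathbf{j}=(j_1,\dots,j_k)$ write $\mathbf{j}\pm1=(j_1\pm1,\dots,j_k\pm1)$. The contractions are $C_{\mathsf{D}}(\mathbf{i})=\mathbf{i}^-_{\mathsf{D}}(\mathbf{i}^+_{\mathsf{D}}-1)\in R(w_0^{(n)})$ and $C_{\mathsf{A}}(\mathbf{i})=(\mathbf{i}^-_{\mathsf{A}}-1)\mathbf{i}^+_{\mathsf{A}}\in R(w_0^{(n)})$. For $s\in[0,\bar n]$, writing $\mathbf{i}=\mathbf{i}^-(s)\,\mathbf{i}^+(s)$ with $|\mathbf{i}^+(s)|=s$, the extensions are $E_{\mathsf{D}}(s)(\mathbf{i})=\mathbf{i}^-(s)\,\mathsf{D}_{n+1}\,(\mathbf{i}^+(s)+1)$ and $E_{\mathsf{A}}(s)(\mathbf{i})=(\mathbf{i}^-(s)+1)\,\mathsf{A}_{n+1}\,\mathbf{i}^+(s)$, both in $R(w_0^{(n+2)})$. For $\delta=(\delta_1,\dots,\delta_n)\in\{\mathsf{A},\mathsf{D}\}^n$ and $I$ as in the claim, $\mathbf{i}_\delta(I)=(E_{\delta_n}(I_n)\circ\cdots\circ E_{\delta_1}(I_1))(\emptyset)\in R(w_0^{(n+1)})$. The $\delta$-index of $\mathbf{i}$ is $\mathrm{ind}_\delta(\mathbf{i})=(I_1,\dots,I_n)$ with $I_n=\mathrm{ind}_{\delta_n}(\mathbf{i})$, $I_{n-1}=\mathrm{ind}_{\delta_{n-1}}(C_{\delta_n}(\mathbf{i}))$,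 …, $I_1=\mathrm{ind}_{\delta_1}(C_{\delta_2}\circ\cdots\circ C_{\delta_n}(\mathbf{i}))$. *)

From mathcomp Require Import all_boot.
Set Implicit Arguments. Unset Strict Implicit. Unset Printing Implicit Defensive.

(* Words are sequences of natural numbers; letter a stands for s_a. *)

Definition swapn (a x : nat) : nat :=
  if x == a then a.+1 else if x == a.+1 then a else x.

Definition word_perm (w : seq nat) : nat -> nat :=
  foldr (fun a f => fun x => swapn a (f x)) id w.

Definition letters_in (n : nat) (w : seq nat) : bool :=
  all (fun a => (0 < a) && (a <= n)) w.

Definition same_perm (n : nat) (w w' : seq nat) : Prop :=
  forall x, 1 <= x <= n.+1 -> word_perm w x = word_perm w' x.

(** w \in R(w_0^{(n+1)}) : w is a reduced word (no word over [n] representing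
    the same permutation is shorter) and represents the longest element
    w_0 : x |-> n+2-x of S_{n+1}. *)
Definition reduced_w0 (n : nat) (w : seq nat) : Prop :=
  [/\ letters_in n w,
      (forall x, 1 <= x <= n.+1 -> word_perm w x = n.+2 - x) &
      (forall w', letters_in n w' -> same_perm n w' w -> size w <= size w')].

Definition two_move (u v : seq nat) : Prop :=
  exists a b x y, [/\ u = a ++ [:: x; y] ++ b, v = a ++ [:: y; x] ++ b &
                      (y.+1 < x) || (x.+1 < y)].

Inductive moves : nat -> seq nat -> seq nat -> Prop :=
| moves0 u : moves 0 u u
| movesS k u v w : two_move u v -> moves k v w -> moves k.+1 u w.

Definition two_equiv (u v : seq nat) : Prop := exists k, moves k u v.

Inductive AD := LetA | LetD.

Definition Dword (n : nat) : seq nat := rev (iota 1 n).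
Definition Aword (n : nat) : seq nat := iota 1 n.
Definition pat (d : AD) (n : nat) : seq nat :=
  match d with LetA => Aword n | LetD => Dword n end.

Definition shiftup (w : seq nat) : seq nat := map S w.
Definition shiftdown (w : seq nat) : seq nat := map predn w.

Definition min_decomp (d : AD) (n : nat) (i l r : seq nat) : Prop :=
  exists k, moves k i (l ++ pat d n ++ r) /\
    (forall l' r' k', moves k' i (l' ++ pat d n ++ r') -> k <= k').

(** Contractions C_D(i) = i^- (i^+ - 1) and C_A(i) = (i^- - 1) i^+. *)
Definition contract (d : AD) (l r : seq nat) : seq nat :=
  match d with
  | LetD => l ++ shiftdown r
  | LetA => shiftdown l ++ r
  end.

(** [ind_rev ds Is i] : with ds = rev delta and Is = rev I, the
    delta-index of i is I (for a choice of minimal decompositions at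
    every stage).  The empty word is the only element of R(w_0^{(1)}). *)
Fixpoint ind_rev (ds : seq AD) (Is : seq nat) (i : seq nat) : Prop :=
  match ds, Is with
  | [::], [::] => i = [::]
  | d :: ds', k :: Is' =>
      exists l r, [/\ min_decomp d (size ds) i l r, size r = k &
                      ind_rev ds' Is' (contract d l r)]
  | _, _ => False
  end.

Definition ind_delta (delta : seq AD) (I : seq nat) (i : seq nat) : Prop :=
  ind_rev (rev delta) (rev I) i.

Definition ext (d : AD) (s k : nat) (w : seq nat) : seq nat :=
  let wm := take (size w - s) w in
  let wp := drop (size w - s) w in
  match d with
  | LetD => wm ++ Dword k ++ shiftup wp
  | LetA => shiftup wm ++ Aword k ++ wp
  end.

Fixpoint iword_aux (k : nat) (ds : seq AD) (Is : seq nat) (w : seq nat)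
  : seq nat :=
  match ds, Is with
  | d :: ds', s :: Is' => iword_aux k.+1 ds' Is' (ext d s k w)
  | _, _ => w
  end.

(** i_delta(I) = (E_{delta_n}(I_n) o ... o E_{delta_1}(I_1))(empty). *)
Definition iword (delta : seq AD) (I : seq nat) : seq nat :=
  iword_aux 1 delta I [::].

From Stdlib Require Classical Wf_nat.
From mathcomp Require Import all_boot zify.
Set Implicit Arguments. Unset Strict Implicit. Unset Printing Implicit Defensive.

(* Two words are related by 2-moves iff, for every c, their subwords on the
   letters {c, c+1} coincide: these are the only pairs of letters that do not
   commute (projection lemma for partially commutative monoids).  Now let
   i ~ E_D(s)(w) = w^- D_{n+1} (w^+ + 1) and i ~ l D_{n+1} r.  Comparing the
   {c, c+1}-subwords, the cut around D_{n+1} either agrees with the one of the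
   extension or is shifted, and a shift changes the numbers of letters c and
   c+1 to the left of the cut in the same direction.  So the sign of
   #_c(w^-) - #_c(l) does not depend on c; it can be neither positive at
   c = n+1 nor negative at c = 1, hence the cuts agree: |r| = s and the
   contraction C_D(i) = l (r - 1) is 2-equivalent to w.  The A case is the
   mirror image, and induction along delta gives the index. *)

Definition distant (x y : nat) : bool := (y.+1 < x) || (x.+1 < y).

Definition in_pair (c z : nat) : bool := (z == c) || (z == c.+1).

Lemma in_pair_lo c : in_pair c c.
Proof. by rewrite /in_pair eqxx. Qed.

Lemma in_pair_hi c : in_pair c c.+1.
Proof. by rewrite /in_pair eqxx orbT. Qed.

Lemma distantP x y : reflect (forall c, in_pair c x -> ~~ in_pair c y) (distant x y).
Proof.
apply: (iffP idP) => [xy c /orP[] /eqP cx | far].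
- by apply/norP; split; apply/eqP; move: xy; rewrite /distant; lia.
- by apply/norP; split; apply/eqP; move: xy; rewrite /distant; lia.
have /norP[/eqP yx /eqP yx1] := far x (in_pair_lo x).
have [x0|x_gt0] := posnP x; first by rewrite /distant; lia.
have : in_pair x.-1 x by rewrite -{2}(prednK x_gt0) in_pair_hi.
by move/far => /norP[/eqP yx2 _]; rewrite /distant; lia.
Qed.

Lemma distantC x y : distant x y = distant y x.
Proof. by rewrite /distant orbC. Qed.

Lemma moves_trans k m u v w : moves k u v -> moves m v w -> moves (k + m) u w.
Proof.
elim=> [//|k' u0 v0 w0 uv _ IH] vw.
by rewrite addSn; apply: movesS uv (IH vw).
Qed.

Lemma moves_cons x k u v : moves k u v -> moves k (x :: u) (x :: v).
Proof.
elim=> [u0|k' u0 v0 w0 uv _ IH]; first exact: moves0.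
apply: movesS IH.
by case: uv => [a [b [y [z [-> -> yz]]]]]; exists (x :: a), b, y, z.
Qed.

Lemma moves_past x v1 v2 : all (distant x) v1 ->
  moves (size v1) (v1 ++ x :: v2) (x :: v1 ++ v2).
Proof.
elim: v1 => [_|y v1 IH] /=; first exact: moves0.
case/andP => xy /IH /(moves_cons y) yx.
rewrite -addn1; apply: moves_trans yx _; apply: movesS (moves0 _).
by exists [::], (v1 ++ v2), y, x; rewrite distantC in xy.
Qed.

Definition pair_proj (c : nat) (s : seq nat) : seq nat := filter (in_pair c) s.

Definition same_projs (u v : seq nat) : Prop := forall c, pair_proj c u = pair_proj c v.

Lemma pair_proj_cat c u v : pair_proj c (u ++ v) = pair_proj c u ++ pair_proj c v.
Proof. exact: filter_cat. Qed.

Lemma pair_proj_cons c x s : pair_proj c (x :: s) =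
  if in_pair c x then x :: pair_proj c s else pair_proj c s.
Proof. by []. Qed.

Lemma same_projs_cat u u' v v' :
  same_projs u u' -> same_projs v v' -> same_projs (u ++ v) (u' ++ v').
Proof. by move=> uu' vv' c; rewrite !pair_proj_cat uu' vv'. Qed.

Lemma same_projs_rev u v : same_projs u v -> same_projs (rev u) (rev v).
Proof. by move=> uv c; rewrite /pair_proj !filter_rev -!/(pair_proj c _) uv. Qed.

Lemma two_move_same_projs u v : two_move u v -> same_projs u v.
Proof.
case=> [a [b [x [y [-> -> /distantP far]]]]] c.
rewrite !pair_proj_cat /=; congr (_ ++ _).
case cx: (in_pair c x); case cy: (in_pair c y) => //.
by have := far c cx; rewrite cy.
Qed.

Lemma moves_same_projs k u v : moves k u v -> same_projs u v.
Proof. by elim=> [//|k' u0 v0 w0 /two_move_same_projs uv _ vw] c; rewrite uv vw. Qed.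

Lemma split_first_occurrence (x : nat) v : x \in v ->
  exists v1 v2, v = v1 ++ x :: v2 /\ x \notin v1.
Proof.
move=> xv; exists (take (index x v) v), (drop (index x v).+1 v); split.
  by rewrite -{1}(cat_take_drop (index x v) v) (drop_nth x) ?index_mem ?nth_index.
by rewrite in_take // ltnn.
Qed.

Lemma same_projs_cons_split x u v : same_projs (x :: u) v ->
  exists v1 v2, [/\ v = v1 ++ x :: v2, all (distant x) v1 & same_projs u (v1 ++ v2)].
Proof.
move=> xuv.
have xv : x \in v.
  have : x \in pair_proj x v by rewrite -xuv pair_proj_cons in_pair_lo mem_head.
  by rewrite mem_filter => /andP[].
have [v1 [v2 [Ev xNv1]]] := split_first_occurrence xv; subst v.
have v1_far c : in_pair c x -> pair_proj c v1 = [::].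
  move=> cx; have := xuv c; rewrite pair_proj_cat !pair_proj_cons cx.
  case E: (pair_proj c v1) => [//|y t] [xy _].
  have : y \in pair_proj c v1 by rewrite E mem_head.
  by rewrite mem_filter -xy (negbTE xNv1) andbF.
exists v1, v2; split => //.
  apply/allP => y yv1; apply/distantP => c /v1_far pv1.
  have : y \notin pair_proj c v1 by rewrite pv1.
  by rewrite mem_filter yv1 andbT.
move=> c; have := xuv c; rewrite !pair_proj_cat !pair_proj_cons.
by case: ifP => [/v1_far -> [] ->|_ ->].
Qed.

Lemma same_projs_nil u : same_projs u [::] -> u = [::].
Proof. by case: u => [//|y u] /(_ y); rewrite pair_proj_cons in_pair_lo. Qed.

Lemma same_projs_two_equiv u v : same_projs u v -> two_equiv v u.
Proof.
elim: u v => [|x u IH] v uv.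
  by rewrite (same_projs_nil (fun c => esym (uv c))); exists 0; apply: moves0.
have [v1 [v2 [-> far /IH [k vu]]]] := same_projs_cons_split uv.
by exists (size v1 + k); apply: moves_trans (moves_past v2 far) (moves_cons x vu).
Qed.

Lemma two_equivP u v : two_equiv u v <-> same_projs u v.
Proof.
split=> [[k /moves_same_projs //]|uv].
by apply: same_projs_two_equiv => c; rewrite uv.
Qed.

Lemma count_pair_proj c z s : in_pair c z -> count_mem z (pair_proj c s) = count_mem z s.
Proof.
move=> cz; elim: s => [//|y s IH]; rewrite pair_proj_cons /=.
case: ifP => [_|cy] /=; rewrite IH //.
by have -> : (y == z) = false by apply: contraFF cy => /eqP ->.
Qed.

Lemma count_pair_proj_lo c s : count_mem c (pair_proj c s) = count_mem c s.
Proof. exact/count_pair_proj/in_pair_lo. Qed.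

Lemma count_pair_proj_hi c s : count_mem c.+1 (pair_proj c s) = count_mem c.+1 s.
Proof. exact/count_pair_proj/in_pair_hi. Qed.

Lemma same_projs_count u v z : same_projs u v -> count_mem z u = count_mem z v.
Proof. by move=> uv; rewrite -count_pair_proj_lo uv count_pair_proj_lo. Qed.

Lemma same_projs_size u v : same_projs u v -> size u = size v.
Proof. by move=> uv; apply/perm_size/allP => z _; apply/eqP/same_projs_count. Qed.

Lemma pair_proj_count_lo c s : count_mem c.+1 s = 0 ->
  pair_proj c s = nseq (count_mem c s) c.
Proof.
elim: s => [//|x s IH]; rewrite pair_proj_cons /= /in_pair.
have [->|_] := eqVneq x c.+1; first by [].
by rewrite orbF; case: eqP => [-> /IH ->|_ /IH].
Qed.

Lemma pair_proj_count_hi c s : count_mem c s = 0 ->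
  pair_proj c s = nseq (count_mem c.+1 s) c.+1.
Proof.
elim: s => [//|x s IH]; rewrite pair_proj_cons /= /in_pair.
have [->|_] := eqVneq x c; first by [].
by case: eqP => [-> /IH ->|_ /IH].
Qed.

Lemma pair_proj_eq_count c u v : (forall z, count_mem z u = count_mem z v) ->
  count_mem c u = 0 \/ count_mem c.+1 u = 0 -> pair_proj c u = pair_proj c v.
Proof.
move=> uv [u0|u0]; first by rewrite !pair_proj_count_hi -?uv.
by rewrite !pair_proj_count_lo -?uv.
Qed.

Lemma cat_factor_cases (T : eqType) (p q : T) X Y X' Y' : p != q ->
  X ++ p :: q :: Y = X' ++ p :: q :: Y' ->
  [\/ X = X' /\ Y = Y', exists Z, X = X' ++ p :: q :: Z
    | exists Z, X' = X ++ p :: q :: Z].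
Proof.
move=> pq; elim: X X' => [|x X IH] [|x' X'] /=.
- by case=> ->; constructor 1.
- case: X' => [|y Z] [<- qp]; first by rewrite qp eqxx in pq.
  by move=> _; constructor 3; exists Z; rewrite qp.
- case: X {IH} => [|y Z] [-> pq'] /=; first by rewrite pq' eqxx in pq.
  by move=> _; constructor 2; exists Z; rewrite pq'.
- case=> -> /IH [[-> ->]|[Z ->]|[Z ->]];
    [constructor 1 | constructor 2 | constructor 3]; by [|exists Z].
Qed.

Lemma pair_proj_iota_out c m k : (m + k <= c) || (c.+1 < m) ->
  pair_proj c (iota m k) = [::].
Proof.
move=> out; rewrite /pair_proj (@eq_in_filter _ _ pred0) ?filter_pred0 // => z.
by rewrite mem_iota /in_pair => /andP[? ?] /=; apply/negbTE/norP; split; apply/eqP; lia.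
Qed.

Lemma pair_proj_Dword n c : 0 < c < n -> pair_proj c (Dword n) = [:: c.+1; c].
Proof.
move=> /andP[c_gt0 cn]; rewrite /Dword /pair_proj filter_rev -/(pair_proj c _).
have -> : n = c.-1 + (2 + (n - c.+1)) by lia.
rewrite !iotaD add1n prednK // !pair_proj_cat.
rewrite (@pair_proj_iota_out c 1 c.-1) ?(@pair_proj_iota_out c (c + 2)); try lia.
by rewrite /pair_proj /in_pair /= !eqxx ?orbT.
Qed.

Lemma count_Dword n z : count_mem z (Dword n) = (0 < z <= n).
Proof.
rewrite /Dword count_rev count_uniq_mem ?iota_uniq // mem_iota.
by case: z => [|z] //=; rewrite add1n ltnS.
Qed.

Lemma interval_succ_const (P : nat -> bool) a b :
  (forall c, a <= c < b -> P c = P c.+1) ->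
  forall c c', a <= c <= b -> a <= c' <= b -> P c = P c'.
Proof.
move=> step.
have to_b c : a <= c <= b -> P c = P b.
  case/andP=> ac; elim: b step => [|b IH] step cb; first by have -> : c = 0 by lia.
  have [->//|cNb] := eqVneq c b.+1.
  rewrite -(step b) ?IH //; try lia.
  by move=> d ?; apply: step; lia.
by move=> c c' /to_b -> /to_b ->.
Qed.

Section CancelDword.

Variables (n : nat) (L R A B : seq nat).
Hypotheses (n_gt0 : 0 < n)
  (A_low : {in A, forall z, 0 < z < n}) (B_high : {in B, forall z, 1 < z <= n})
  (LRAB : same_projs (L ++ Dword n ++ R) (A ++ Dword n ++ B)).

Let count_total z : count_mem z L + (0 < z <= n) + count_mem z R =
                    count_mem z A + (0 < z <= n) + count_mem z B.
Proof. by have := same_projs_count z LRAB; rewrite !count_cat count_Dword !addnA. Qed.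

Let count_A_out z : ~~ (0 < z < n) -> count_mem z A = 0.
Proof. by move=> zout; apply/count_memPn; apply: contra zout => /A_low. Qed.

Let count_B_out z : ~~ (1 < z <= n) -> count_mem z B = 0.
Proof. by move=> zout; apply/count_memPn; apply: contra zout => /B_high. Qed.

Let count_LR_out z : ~~ (0 < z <= n) -> count_mem z L = 0 /\ count_mem z R = 0.
Proof.
by move=> zout; have := count_total z; rewrite (negbTE zout) count_A_out ?count_B_out; lia.
Qed.

Lemma Dword_pair_proj_cases c : 0 < c < n ->
  [\/ pair_proj c L = pair_proj c A /\ pair_proj c R = pair_proj c B,
      (count_mem c L < count_mem c A) && (count_mem c.+1 L < count_mem c.+1 A)
    | (count_mem c A < count_mem c L) && (count_mem c.+1 A < count_mem c.+1 L)].
Proof.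
move=> cn; have := LRAB c; rewrite !pair_proj_cat pair_proj_Dword //.
rewrite -(count_pair_proj_lo c L) -(count_pair_proj_lo c A).
rewrite -(count_pair_proj_hi c L) -(count_pair_proj_hi c A).
have c1Nc : c.+1 != c by rewrite gtn_eqF.
have cNc1 : (c == c.+1) = false by rewrite ltn_eqF.
case/(cat_factor_cases c1Nc) => [|[Z ->]|[Z ->]];
  [by constructor 1|constructor 3|constructor 2];
  by rewrite !count_cat /= !eqxx (negbTE c1Nc) cNc1; lia.
Qed.

Lemma count_cmp_succ c : 0 < c < n ->
  (count_mem c L < count_mem c A) = (count_mem c.+1 L < count_mem c.+1 A) /\
  (count_mem c A < count_mem c L) = (count_mem c.+1 A < count_mem c.+1 L).
Proof.
case/Dword_pair_proj_cases => [[eqL _]|/andP[? ?]|/andP[? ?]]; try lia.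
have := congr1 (count_mem c) eqL; have := congr1 (count_mem c.+1) eqL.
by rewrite !count_pair_proj_lo !count_pair_proj_hi => -> ->; rewrite !ltnn.
Qed.

Lemma count_L_A z : count_mem z L = count_mem z A.
Proof.
have [zn|zout] := boolP (0 < z <= n); last first.
  rewrite (count_LR_out zout).1 count_A_out //.
  by apply: contra zout => /andP[? ?]; lia.
have lt_const c c' : 0 < c <= n -> 0 < c' <= n ->
    (count_mem c L < count_mem c A) = (count_mem c' L < count_mem c' A).
  exact: (@interval_succ_const (fun c => count_mem c L < count_mem c A) 1 n
    (fun c cn => (count_cmp_succ cn).1)).
have gt_const c c' : 0 < c <= n -> 0 < c' <= n ->
    (count_mem c A < count_mem c L) = (count_mem c' A < count_mem c' L).
  exact: (@interval_succ_const (fun c => count_mem c A < count_mem c L) 1 n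
    (fun c cn => (count_cmp_succ cn).2)).
have not_lt : ~~ (count_mem z L < count_mem z A).
  by rewrite (lt_const z n zn) ?count_A_out ?ltnn //; lia.
have not_gt : ~~ (count_mem z A < count_mem z L).
  rewrite (gt_const z 1 zn) // -leqNgt.
  by have := count_total 1; rewrite count_B_out // n_gt0 /=; lia.
lia.
Qed.

Lemma count_R_B z : count_mem z R = count_mem z B.
Proof. by have := count_total z; rewrite count_L_A; lia. Qed.

Lemma cancel_Dword : same_projs L A /\ same_projs R B.
Proof.
have edge c : ~~ (0 < c < n) -> ~~ (0 < c <= n) \/ ~~ (0 < c.+1 <= n) by lia.
split=> c; have [cn|cout] := boolP (0 < c < n);
  try by case: (Dword_pair_proj_cases cn) => [[]//|/andP[]|/andP[]];
    rewrite count_L_A ltnn.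
- apply: pair_proj_eq_count count_L_A _.
  by case: (edge c cout) => /count_LR_out[]; [left|right].
- apply: pair_proj_eq_count count_R_B _.
  by case: (edge c cout) => /count_LR_out[]; [left|right].
Qed.

End CancelDword.

Lemma cancel_Aword n (L R A B : seq nat) : 0 < n ->
  {in A, forall z, 1 < z <= n} -> {in B, forall z, 0 < z < n} ->
  same_projs (L ++ Aword n ++ R) (A ++ Aword n ++ B) ->
  same_projs L A /\ same_projs R B.
Proof.
move=> n_gt0 A_high B_low /same_projs_rev; rewrite !rev_cat -!catA.
case/cancel_Dword => [//|z|z|/same_projs_rev RB /same_projs_rev LA];
  rewrite ?mem_rev; [exact: B_low|exact: A_high|].
by rewrite !revK in RB LA.
Qed.

Lemma same_projs_shiftdown r b : same_projs r (shiftup b) -> same_projs (shiftdown r) b.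
Proof.
move=> rb c.
have r0 : 0 \notin r.
  by apply/count_memPn; rewrite (same_projs_count 0 rb); apply/count_memPn/mapP => -[].
rewrite /pair_proj /shiftdown filter_map (@eq_in_filter _ _ (in_pair c.+1) r).
  by have := rb c.+1; rewrite /pair_proj /shiftup filter_map => ->; rewrite (mapK succnK).
by case=> [|z] zr //; rewrite zr in r0.
Qed.

Lemma ext_cancel d s m w l r : s <= size w -> {in w, forall z, 0 < z <= m} ->
  same_projs (l ++ pat d m.+1 ++ r) (ext d s m.+1 w) ->
  size r = s /\ same_projs (contract d l r) w.
Proof.
move=> s_le w_letters; have := cat_take_drop (size w - s) w; rewrite /ext.
set wm := take _ w; set wp := drop _ w => w_eq.
have size_wp : size wp = s by rewrite size_drop; lia.
have wm_letters z : z \in wm -> 0 < z <= m by move/mem_take/w_letters.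
have wp_letters z : z \in wp -> 0 < z <= m by move/mem_drop/w_letters.
rewrite -w_eq -size_wp; case: d => /=.
- case/(@cancel_Aword m.+1 l r (shiftup wm) wp)
    => [//|_ /mapP[y /wm_letters ? ->]|z /wp_letters|lwm rwp]; try lia.
  split; first exact: same_projs_size.
  exact: same_projs_cat (same_projs_shiftdown lwm) rwp.
- case/(@cancel_Dword m.+1 l r wm (shiftup wp))
    => [//|z /wm_letters|_ /mapP[y /wp_letters ? ->]|lwm rwp]; try lia.
  split; first by rewrite (same_projs_size rwp) /shiftup size_map.
  exact: same_projs_cat lwm (same_projs_shiftdown rwp).
Qed.

Lemma iword_aux_rcons k ds Is w d s : size ds = size Is ->
  iword_aux k (rcons ds d) (rcons Is s) w = ext d s (k + size ds) (iword_aux k ds Is w).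
Proof.
elim: ds k Is w => [|d' ds IH] k [|s' Is] w //=; first by rewrite addn0.
by case=> size_eq; rewrite IH // addSnnS.
Qed.

Lemma iword_rcons delta d I s : size delta = size I ->
  iword (rcons delta d) (rcons I s) = ext d s (size delta).+1 (iword delta I).
Proof. exact: iword_aux_rcons. Qed.

Lemma size_ext d s k w : size (ext d s k w) = size w + k.
Proof.
have := size_takel (leq_subr s (size w)); have := size_drop (size w - s) w.
by case: d; rewrite /ext !size_cat /shiftup ?size_map ?size_rev size_iota; lia.
Qed.

Lemma ext_letters d s k w : {in w, forall z, 0 < z <= k} ->
  {in ext d s k.+1 w, forall z, 0 < z <= k.+1}.
Proof.
move=> w_letters z; case: d; rewrite /ext !mem_cat /Aword /Dword ?mem_rev mem_iota.
- case/orP => [/mapP[y /mem_take /w_letters ? ->]|/orP[|/mem_drop /w_letters]]; lia.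
- case/orP => [/mem_take /w_letters|/orP[|/mapP[y /mem_drop /w_letters ? ->]]]; lia.
Qed.

Lemma iword_size_letters delta I : size delta = size I ->
  size (iword delta I) = 'C((size I).+1, 2) /\
  {in iword delta I, forall z, 0 < z <= size I}.
Proof.
elim/last_ind: I delta => [|I s IH] delta; first by move/size0nil ->.
case/lastP: delta => [|delta d]; first by rewrite size_rcons.
rewrite !size_rcons => -[size_eq]; have [size_w w_letters] := IH _ size_eq.
rewrite iword_rcons // size_eq size_ext size_w [RHS]binS bin1 addnC.
by split => //; apply: ext_letters.
Qed.

Definition index_bounded (I : seq nat) : Prop :=
  forall j, j < size I -> nth 0 I j <= 'C(j.+1, 2).

Lemma index_bounded_rcons I s : index_bounded (rcons I s) ->
  index_bounded I /\ s <= 'C((size I).+1, 2).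
Proof.
move=> I_le; split=> [j jI|].
  by have := I_le j; rewrite nth_rcons jI size_rcons ltnW //; apply.
by have := I_le (size I); rewrite nth_rcons ltnn eqxx size_rcons; apply.
Qed.

Lemma iword_rcons_cancel delta d I s i l r k : size delta = size I ->
  s <= 'C((size I).+1, 2) -> same_projs i (iword (rcons delta d) (rcons I s)) ->
  moves k i (l ++ pat d (size I).+1 ++ r) ->
  size r = s /\ same_projs (contract d l r) (iword delta I).
Proof.
move=> size_eq s_le i_ext /moves_same_projs i_lr.
have [size_w w_letters] := iword_size_letters size_eq.
rewrite iword_rcons // size_eq in i_ext.
by apply: ext_cancel w_letters _ => [|c]; rewrite ?size_w -?i_lr.
Qed.

Lemma ext_decomp d s m w : exists l r, ext d s m w = l ++ pat d m ++ r.
Proof. by case: d; do 2 eexists. Qed.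

Lemma min_decomp_exists d m i l0 r0 : two_equiv i (l0 ++ pat d m ++ r0) ->
  exists l r, min_decomp d m i l r.
Proof.
case=> k0 ik0; pose P k := exists l r, moves k i (l ++ pat d m ++ r).
have [k [[[l [r ik]] k_min] _]] :=
  Wf_nat.dec_inh_nat_subset_has_unique_least_element P
    (fun k => Classical_Prop.classic (P k))
    (ex_intro P k0 (ex_intro _ l0 (ex_intro _ r0 ik0))).
by exists l, r, k; split=> // l' r' k' ik'; apply/leP/k_min; exists l', r'.
Qed.

Lemma ind_delta_rcons delta d J s i :
  ind_delta (rcons delta d) (rcons J s) i <->
  exists l r, [/\ min_decomp d (size delta).+1 i l r, size r = s &
                  ind_delta delta J (contract d l r)].
Proof. by rewrite /ind_delta !rev_rcons /= size_rev. Qed.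

Lemma ind_delta_iword delta I i : size delta = size I -> index_bounded I ->
  same_projs i (iword delta I) -> ind_delta delta I i.
Proof.
elim/last_ind: I delta i => [|I s IH] delta i.
  by move=> /size0nil -> _ /same_projs_nil.
case/lastP: delta => [|delta d]; first by rewrite size_rcons.
rewrite !size_rcons => -[size_eq] /index_bounded_rcons[I_le s_le] i_ext.
have [l0 [r0 ext_eq]] := ext_decomp d s (size delta).+1 (iword delta I).
have [l [r decomp]] : exists l r, min_decomp d (size delta).+1 i l r.
  apply: (min_decomp_exists (l0 := l0) (r0 := r0)); rewrite -ext_eq -iword_rcons //.
  by apply/two_equivP => c; rewrite i_ext.
have [k [ik _]] := decomp; rewrite size_eq in ik.
have [size_r contr] := iword_rcons_cancel size_eq s_le i_ext ik.
by apply/ind_delta_rcons; exists l, r; split => //; apply: IH.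
Qed.

Lemma ind_delta_uniq delta I J i : size delta = size I -> index_bounded I ->
  same_projs i (iword delta I) -> ind_delta delta J i -> J = I.
Proof.
elim/last_ind: I delta J i => [|I s IH] delta J i.
  move=> /size0nil -> _ _; case/lastP: J => [//|J s].
  by rewrite /ind_delta rev_rcons.
case/lastP: delta => [|delta d]; first by rewrite size_rcons.
rewrite !size_rcons => -[size_eq] /index_bounded_rcons[I_le s_le] i_ext.
case/lastP: J => [|J s']; first by rewrite /ind_delta !rev_rcons.
case/ind_delta_rcons => l [r [[k [ik _]] <- ind_J]]; rewrite size_eq in ik.
have [-> contr] := iword_rcons_cancel size_eq s_le i_ext ik.
by rewrite (IH _ _ _ size_eq I_le contr ind_J).
Qed.

Theorem lemma4p10 (n : nat) (delta : seq AD) (I : seq nat) (i : seq nat) :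
  size delta = n ->
  size I = n ->
  (* I_j \in [0, j(j-1)/2] for j = 1..n  (0-indexed: nth j, j < n) *)
  (forall j, j < n -> nth 0 I j <= (j.+1 * j) %/ 2) ->
  reduced_w0 n i ->
  two_equiv i (iword delta I) ->
  ind_delta delta I i /\ (forall J, ind_delta delta J i -> J = I).
Proof.
(* Membership in R(w_0) is not needed: the index is determined on the whole
   2-equivalence class of i_delta(I). *)
move=> delta_n I_n I_le _ /two_equivP i_I.
have size_eq : size delta = size I by rewrite delta_n I_n.
have I_bounded : index_bounded I.
  by move=> j; rewrite I_n bin2 -divn2; apply: I_le.
split; first exact: ind_delta_iword.
by move=> J; apply: ind_delta_uniq.
Qed.
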